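(* Let $n,p\ge 1$, let $f:[-1,1]\to\mathbb{R}$ be a continuous, monotone non-decreasing function, and let $\mathcal{U}=\{\boldsymbol{u}^1,\ldots,\boldsymbol{u}^p\}\subset\mathbb{S}^n$ be a set of unit-quaternion-valued vectors. Define the real $p\times p$ matrix $C$ by $$c_{\eta\xi}=f\!\left(\tfrac{1}{n}\,\mathrm{Re}\{\langle \boldsymbol{u}^\xi,\boldsymbol{u}^\eta\rangle\}\right),\qquad \eta,\xi\in\{1,\ldots,p\}.$$ Suppose $C$ is invertible, let $c^{-1}_{\eta\xi}$ denote the $(\eta,\xi)$-entry of $C^{-1}$, and set $v_i^\xi=\sum_{\eta=1}^p u_i^\eta c^{-1}_{\eta\xi}$ for $i=1,\ldots,n$, $\xi=1,\ldots,p$. Consider the quaternion-valued recurrent projection neural network (QRPNN) which, from a state $\boldsymbol{x}(t)\in\mathbb{S}^n$, computes $$w_\xi(t)=f\!\left(\tfrac{1}{n}\mathrm{Re}\{\langle\boldsymbol{x}(t),\boldsymbol{u}^\xi\rangle\}\right),\qquad a_i(t)=\sum_{\xi=1}^p w_\xi(t)\,v_i^\xi,$$ and updates $x_i(t+1)=\sigma(a_i(t))$ if $0<|a_i(t)|<+\infty$ and $x_i(t+1)=x_i(t)$ otherwise. Then every fundamental memory $\boldsymbol{u}^\gamma$, $\gamma=1,\ldots,p$, is a stationary state (fixed point) of this QRPNN: if $\boldsymbol{x}(t)=\boldsymbol{u}^\gamma$ then $\boldsymbol{x}(t+1)=\boldsymbol{u}^\gamma$.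
   Context: $\mathbb{H}$ denotes the quaternions $q=q_0+q_1\mathbf{i}+q_2\mathbf{j}+q_3\mathbf{k}$ with $\mathbf{i}^2=\mathbf{j}^2=\mathbf{k}^2=\mathbf{ijk}=-1$; $\bar q=q_0-q_1\mathbf{i}-q_2\mathbf{j}-q_3\mathbf{k}$, $|q|=\sqrt{\bar q q}$, $\mathrm{Re}\{q\}=q_0$. $\mathbb{S}=\{q\in\mathbb{H}:|q|=1\}$ is the set of unit quaternions, and $\sigma:\mathbb{H}\setminus\{0\}\to\mathbb{S}$ is $\sigma(q)=q/|q|$. For $\boldsymbol{x},\boldsymbol{y}\in\mathbb{H}^n$ the inner product is $\langle\boldsymbol{x},\boldsymbol{y}\rangle=\sum_{i=1}^n\bar y_i x_i$. *)

From HB Require Import structures.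
From mathcomp Require Import all_boot all_order all_algebra.
From mathcomp Require Import all_classical all_reals all_analysis.
Set Implicit Arguments. Unset Strict Implicit. Unset Printing Implicit Defensive.
Import Order.TTheory GRing.Theory Num.Theory.
Local Open Scope ring_scope.

(* Quaternions over a real type R: q = q0 + q1 i + q2 j + q3 k. *)
Record quat (R : realType) := Quat { q0 : R; q1 : R; q2 : R; q3 : R }.

Section Quat.
Variable R : realType.
Implicit Types p q : quat R.

Definition qadd p q := Quat (q0 p + q0 q) (q1 p + q1 q) (q2 p + q2 q) (q3 p + q3 q).
Definition qzero : quat R := Quat 0 0 0 0.
(* Hamilton product with i^2 = j^2 = k^2 = ijk = -1 *)
Definition qmul p q := Quat
  (q0 p * q0 q - q1 p * q1 q - q2 p * q2 q - q3 p * q3 q)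
  (q0 p * q1 q + q1 p * q0 q + q2 p * q3 q - q3 p * q2 q)
  (q0 p * q2 q - q1 p * q3 q + q2 p * q0 q + q3 p * q1 q)
  (q0 p * q3 q + q1 p * q2 q - q2 p * q1 q + q3 p * q0 q).
Definition qconj q := Quat (q0 q) (- q1 q) (- q2 q) (- q3 q).
Definition qscale (r : R) q := Quat (r * q0 q) (r * q1 q) (r * q2 q) (r * q3 q).
Definition qnorm q := Num.sqrt (q0 q ^+ 2 + q1 q ^+ 2 + q2 q ^+ 2 + q3 q ^+ 2).
Definition qRe q := q0 q.
Definition qsigma q := qscale (qnorm q)^-1 q.

Definition qsum (n : nat) (F : 'I_n -> quat R) : quat R :=
  foldr qadd qzero [seq F i | i <- enum 'I_n].

Definition qinner (n : nat) (x y : 'I_n -> quat R) : quat R :=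
  qsum (fun i => qmul (qconj (y i)) (x i)).

Definition unit_qvec (n : nat) (x : 'I_n -> quat R) : Prop :=
  forall i, qnorm (x i) = 1.

Definition qrpnn_C (n p : nat) (f : R -> R) (u : 'I_p -> 'I_n -> quat R)
  : 'M[R]_p := \matrix_(eta, xi) f (n%:R^-1 * qRe (qinner (u xi) (u eta))).

Definition qrpnn_v (n p : nat) (f : R -> R) (u : 'I_p -> 'I_n -> quat R)
  (xi : 'I_p) (i : 'I_n) : quat R :=
  qsum (fun eta => qscale (invmx (qrpnn_C f u) eta xi) (u eta i)).

Definition qrpnn_a (n p : nat) (f : R -> R) (u : 'I_p -> 'I_n -> quat R)
  (x : 'I_n -> quat R) (i : 'I_n) : quat R :=
  qsum (fun xi => qscale (f (n%:R^-1 * qRe (qinner x (u xi)))) (qrpnn_v f u xi i)).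

(* one synchronous update x(t) |-> x(t+1); |a| is always finite here *)
Definition qrpnn_step (n p : nat) (f : R -> R) (u : 'I_p -> 'I_n -> quat R)
  (x : 'I_n -> quat R) : 'I_n -> quat R :=
  fun i => let a := qrpnn_a f u x i in
           if 0 < qnorm a then qsigma a else x i.
End Quat.

From HB Require Import structures.
From mathcomp Require Import all_boot all_order all_algebra.
From mathcomp Require Import all_classical all_reals all_analysis.
Import Order.TTheory GRing.Theory Num.Theory numFieldNormedType.Exports.
Local Open Scope ring_scope.
Local Open Scope classical_set_scope.

(* At the memory u^gamma the weights are w_xi = c_{xi gamma}, so the activation
   a_i = sum_eta (C^-1 C)_{eta gamma} u_i^eta collapses to u_i^gamma, a unit
   quaternion, which sigma leaves unchanged. *)

Section RealLinearCoordinate.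
Variables (R : realType) (pr : quat R -> R).
Hypothesis prD : forall p q, pr (qadd p q) = pr p + pr q.
Hypothesis pr0 : pr (qzero R) = 0.
Hypothesis prZ : forall r q, pr (qscale r q) = r * pr q.

Lemma coord_qsum n (F : 'I_n -> quat R) : pr (qsum F) = \sum_(i < n) pr (F i).
Proof.
have foldrE (s : seq (quat R)) : pr (foldr (@qadd R) (qzero R) s) = \sum_(x <- s) pr x.
  by elim: s => [|x s IHs] /=; rewrite ?big_nil ?big_cons ?prD ?IHs.
by rewrite /qsum foldrE big_map big_enum.
Qed.

Lemma coord_qrpnn_a_memory n p (f : R -> R) (u : 'I_p -> 'I_n -> quat R) :
  qrpnn_C f u \in unitmx ->
  forall gamma i, pr (qrpnn_a f u (u gamma) i) = pr (u gamma i).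
Proof.
move=> hC gamma i; set C := qrpnn_C f u.
have weightE xi : f (n%:R^-1 * qRe (qinner (u gamma) (u xi))) = C xi gamma.
  by rewrite mxE.
have -> : pr (qrpnn_a f u (u gamma) i)
        = \sum_(eta < p) (invmx C *m C) eta gamma * pr (u eta i).
  rewrite /qrpnn_a coord_qsum.
  under eq_bigr => xi _ do rewrite prZ weightE /qrpnn_v coord_qsum big_distrr.
  rewrite exchange_big; apply: eq_bigr => eta _ /=.
  rewrite mxE big_distrl; apply: eq_bigr => xi _ /=.
  by rewrite prZ mulrA [C xi gamma * _]mulrC.
rewrite mulVmx // (bigD1 gamma) //= big1 ?addr0 => [|eta /negbTE neq].
  by rewrite mxE eqxx mul1r.
by rewrite mxE neq mul0r.
Qed.

End RealLinearCoordinate.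

Lemma quat_coordE (R : realType) (x y : quat R) :
  q0 x = q0 y -> q1 x = q1 y -> q2 x = q2 y -> q3 x = q3 y -> x = y.
Proof. by case: x; case: y => /= ? ? ? ? ? ? ? ? -> -> -> ->. Qed.

Lemma qrpnn_a_memory (R : realType) n p (f : R -> R)
    (u : 'I_p -> 'I_n -> quat R) :
  qrpnn_C f u \in unitmx -> forall gamma i, qrpnn_a f u (u gamma) i = u gamma i.
Proof.
move=> hC gamma i.
by apply: quat_coordE; apply: coord_qrpnn_a_memory.
Qed.

Lemma qsigma_unit {R : realType} {q : quat R} : qnorm q = 1 -> qsigma q = q.
Proof. by rewrite /qsigma => ->; rewrite invr1 /qscale !mul1r; case: q. Qed.

Theorem theorem1 (R : realType) (n p : nat) (f : R -> R)
  (u : 'I_p -> 'I_n -> quat R)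
  (hn : (1 <= n)%N) (hp : (1 <= p)%N)
  (hfc : {within (`[-1, 1] : set R), continuous f})
  (hfm : {in (`[-1, 1] : set R) &, {homo f : x y / x <= y}})
  (hu : forall xi, unit_qvec (u xi))
  (hC : qrpnn_C f u \in unitmx) :
  forall gamma : 'I_p, qrpnn_step f u (u gamma) = u gamma.
Proof.
move=> gamma; apply: funext => i.
by rewrite /qrpnn_step qrpnn_a_memory // hu ltr01 (qsigma_unit (hu gamma i)).
Qed.
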